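(* Let $(\beta,\gamma)$ be antiferromagnetic, let $I\subset(0,\infty)$ be a closed interval, let $k\geq1$, and let $R_1(\lambda),\dots,R_k(\lambda)$ and $Q_0(\lambda)$ be twice continuously differentiable functions from $I$ to $(\gamma,1/\beta)$. Let $\mathcal{F}$ be the family of functions $Q_m:I\to(\gamma,1/\beta)$ obtained, for all $m\geq0$ and all sequences $a_0,\dots,a_{m-1}\in[k]$, by $$Q_{i+1}(\lambda)=\frac{1+\gamma\lambda R_{a_i}(\lambda)Q_i(\lambda)}{\beta+\lambda R_{a_i}(\lambda)Q_i(\lambda)},\qquad i=0,\dots,m-1.$$ Then there exist bounded intervals $I_1,I_2$ such that for every $\lambda\in I$ and every $Q\in\mathcal{F}$ we have $Q'(\lambda)\in I_1$ and $Q''(\lambda)\in I_2$.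
   Context: A pair $(\beta,\gamma)$ with $\beta,\gamma\geq0$ is antiferromagnetic if $\beta\gamma\in[0,1)$ and at least one is nonzero; when $\beta=0$, $1/\beta=+\infty$. *)

From Stdlib Require Import Reals.
Open Scope R_scope.

Definition antiferro (beta gamma : R) : Prop :=
  0 <= beta /\ 0 <= gamma /\ beta * gamma < 1 /\ (beta <> 0 \/ gamma <> 0).

(* y in the open interval (gamma, 1/beta), with 1/beta = +infinity when beta = 0 *)
Definition in_range (beta gamma y : R) : Prop := gamma < y /\ beta * y < 1.

Definition has_deriv_on (a b : R) (f f' : R -> R) : Prop :=
  forall x, a <= x <= b -> forall eps, 0 < eps ->
    exists delta, 0 < delta /\
      forall y, a <= y <= b -> Rabs (y - x) < delta ->
        Rabs (f y - f x - f' x * (y - x)) <= eps * Rabs (y - x).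

Definition cont_on (a b : R) (f : R -> R) : Prop :=
  forall x, a <= x <= b -> forall eps, 0 < eps ->
    exists delta, 0 < delta /\
      forall y, a <= y <= b -> Rabs (y - x) < delta -> Rabs (f y - f x) < eps.

Definition C2_on (a b : R) (f : R -> R) : Prop :=
  exists f1 f2, has_deriv_on a b f f1 /\ has_deriv_on a b f1 f2 /\ cont_on a b f2.

(* The family F generated from Q0 by the recursion with R_{a_i}, a_i in [k]
   (indices 0..k-1 here). *)
Inductive inFamily (beta gamma : R) (k : nat) (Rs : nat -> R -> R) (Q0 : R -> R)
  : (R -> R) -> Prop :=
| fam_base : inFamily beta gamma k Rs Q0 Q0
| fam_step : forall (Q : R -> R) (i : nat), (i < k)%nat ->
    inFamily beta gamma k Rs Q0 Q ->
    inFamily beta gamma k Rs Q0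
      (fun l => (1 + gamma * l * Rs i l * Q l) / (beta + l * Rs i l * Q l)).

(* Write X = l R Q, so that one step of the recursion reads Q_new = phi(X) with
   phi(x) = (1 + gamma x) / (beta + x) = gamma + (1 - beta gamma) / (beta + x).
   Since phi is decreasing and the R_i, l range over compact subsets of (0, oo),
   all Q in the family, and hence all X, stay in fixed compact subintervals of
   (0, oo).  Track the logarithmic derivative d = Q'/Q: it transforms as
   d_new = h(X) (1/l + R'/R + d) with h(x) = x phi'(x) / phi(x), and |h| <= c < 1
   on that compact interval, so |d| stays below the fixed point of the affine
   contraction B |-> c (K + B).  Differentiating once more gives the same
   contraction for d' with a bounded inhomogeneous term.  Finally Q' = Q d and
   Q'' = Q (d^2 + d'). *)

From Stdlib Require Import Reals Lra Lia Psatz.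
From Coquelicot Require Import Coquelicot.
Open Scope R_scope.

Definition Icc (a b : R) : R -> Prop := fun x => a <= x <= b.

Lemma D_in_eq (f g df dg : R -> R) (D : R -> Prop) (x0 : R) :
  (forall x, D x -> f x = g x) -> D x0 -> df x0 = dg x0 ->
  D_in f df D x0 -> D_in g dg D x0.
Proof.
  intros Efg Dx0 Ed H. unfold D_in in *. rewrite <- Ed.
  refine (limit1_ext _ _ _ _ _ _ H). intros x [Dx _]. now rewrite !Efg.
Qed.

Lemma D_in_comp (g dg f df : R -> R) (D : R -> Prop) (x0 : R) :
  derivable_pt_lim g (f x0) (dg (f x0)) -> D_in f df D x0 ->
  D_in (fun x => g (f x)) (fun x => df x * dg (f x)) D x0.
Proof.
  intros Hg Hf. apply (D_in_imp _ _ (Dgf D no_cond f)); [now split |].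
  apply Dcomp; [exact Hf | now apply derivable_pt_lim_D_in].
Qed.

Lemma D_in_inv (f df : R -> R) (D : R -> Prop) (x0 : R) :
  f x0 <> 0 -> D_in f df D x0 ->
  D_in (fun x => / f x) (fun x => - df x / f x ^ 2) D x0.
Proof.
  intros Hf H.
  assert (Hinv : derivable_pt_lim Rinv (f x0) (- / f x0 ^ 2)).
  { apply is_derive_Reals. auto_derive; [exact Hf | field; exact Hf]. }
  refine (D_in_ext _ _ _ _ _ _ (D_in_comp Rinv (fun y => - / y ^ 2) f df D x0 Hinv H)).
  simpl. field. exact Hf.
Qed.

Lemma has_deriv_on_D_in (a b : R) (f f' : R -> R) :
  has_deriv_on a b f f' -> forall x, a <= x <= b -> D_in f f' (Icc a b) x.
Proof.
  intros H x Hx eps Heps.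
  destruct (H x Hx (eps / 2)) as [delta [Hdelta Hlin]]; [lra |].
  exists delta; split; [exact Hdelta |]. intros y [[Hy Hyx] Hdist]. simpl in *.
  unfold Rdist in *.
  assert (Hpos : 0 < Rabs (y - x)) by (apply Rabs_pos_lt; lra).
  replace ((f y - f x) / (y - x) - f' x)
    with ((f y - f x - f' x * (y - x)) / (y - x)) by (field; lra).
  unfold Rdiv. rewrite Rabs_mult, Rabs_inv.
  apply (Rmult_lt_reg_r (Rabs (y - x))); [exact Hpos |].
  rewrite Rmult_assoc, Rinv_l by lra. specialize (Hlin y Hy Hdist). nra.
Qed.

Lemma D_in_Icc_unique (a b : R) (f d1 d2 : R -> R) (x : R) :
  a < b -> a <= x <= b ->
  D_in f d1 (Icc a b) x -> D_in f d2 (Icc a b) x -> d1 x = d2 x.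
Proof.
  intros Hab Hx H1 H2. refine (single_limit _ _ _ _ _ _ H1 H2).
  intros alp Halp. unfold D_x, Icc, Rdist.
  destruct (Rlt_or_le x b) as [Hxb | Hxb].
  - pose proof (Rmin_l alp (b - x)). pose proof (Rmin_r alp (b - x)).
    assert (0 < Rmin alp (b - x)) by (apply Rmin_pos; lra).
    exists (x + Rmin alp (b - x) / 2). rewrite Rabs_right; lra.
  - pose proof (Rmin_l alp (x - a)). pose proof (Rmin_r alp (x - a)).
    assert (0 < Rmin alp (x - a)) by (apply Rmin_pos; lra).
    exists (x - Rmin alp (x - a) / 2). rewrite Rabs_left; lra.
Qed.

Lemma has_deriv_on_cont_on (a b : R) (f f' : R -> R) :
  has_deriv_on a b f f' -> cont_on a b f.
Proof.
  intros H x Hx eps Heps. destruct (H x Hx 1 Rlt_0_1) as [delta [Hdelta Hlin]].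
  set (K := Rabs (f' x) + 1).
  assert (HK : 0 < K) by (unfold K; pose proof (Rabs_pos (f' x)); lra).
  exists (Rmin delta (eps / K)). split; [apply Rmin_pos; [lra | apply Rdiv_lt_0_compat; lra] |].
  intros y Hy Hyx.
  pose proof (Rmin_l delta (eps / K)). pose proof (Rmin_r delta (eps / K)).
  specialize (Hlin y Hy ltac:(lra)).
  assert (Hlip : Rabs (f y - f x) <= K * Rabs (y - x)).
  { replace (f y - f x) with ((f y - f x - f' x * (y - x)) + f' x * (y - x)) by ring.
    eapply Rle_trans; [apply Rabs_triang |]. rewrite Rabs_mult. unfold K. lra. }
  assert (K * Rabs (y - x) < K * (eps / K)) by (apply Rmult_lt_compat_l; lra).
  replace (K * (eps / K)) with eps in * by (field; lra). lra.
Qed.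

Definition clamp (a b y : R) : R := Rmin b (Rmax a y).

Lemma clamp_in (a b y : R) : a <= b -> a <= clamp a b y <= b.
Proof. intros. unfold clamp, Rmin, Rmax. repeat destruct Rle_dec; lra. Qed.

Lemma clamp_id (a b y : R) : a <= y <= b -> clamp a b y = y.
Proof. intros. unfold clamp, Rmin, Rmax. repeat destruct Rle_dec; lra. Qed.

Lemma clamp_dist (a b y c : R) : a <= c <= b -> Rabs (clamp a b y - c) <= Rabs (y - c).
Proof.
  intros. unfold clamp, Rmin, Rmax.
  repeat destruct Rle_dec; unfold Rabs; repeat destruct Rcase_abs; lra.
Qed.

(* Composing with the projection onto [a,b] turns continuity within [a,b]
   into the two-sided continuity required by continuity_ab_min/maj. *)
Lemma cont_on_continuity_pt_clamp (a b : R) (f : R -> R) :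
  a <= b -> cont_on a b f ->
  forall c, a <= c <= b -> continuity_pt (fun y => f (clamp a b y)) c.
Proof.
  intros Hab H c Hc eps Heps. destruct (H c Hc eps Heps) as [delta [Hdelta Hcont]].
  exists delta; split; [exact Hdelta |]. intros y [_ Hy]. simpl in *. unfold Rdist in *.
  rewrite (clamp_id a b c Hc). apply Hcont; [now apply clamp_in |].
  eapply Rle_lt_trans; [apply clamp_dist |]; eassumption.
Qed.

Lemma cont_on_attains_min (a b : R) (f : R -> R) :
  a <= b -> cont_on a b f ->
  exists m, a <= m <= b /\ forall x, a <= x <= b -> f m <= f x.
Proof.
  intros Hab H.
  destruct (continuity_ab_min _ a b Hab (cont_on_continuity_pt_clamp a b f Hab H))
    as [m [Hmin Hm]].
  exists m. split; [exact Hm |]. intros x Hx.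
  specialize (Hmin x Hx). simpl in Hmin. now rewrite !clamp_id in Hmin.
Qed.

Lemma cont_on_attains_max (a b : R) (f : R -> R) :
  a <= b -> cont_on a b f ->
  exists m, a <= m <= b /\ forall x, a <= x <= b -> f x <= f m.
Proof.
  intros Hab H.
  destruct (continuity_ab_maj _ a b Hab (cont_on_continuity_pt_clamp a b f Hab H))
    as [m [Hmax Hm]].
  exists m. split; [exact Hm |]. intros x Hx.
  specialize (Hmax x Hx). simpl in Hmax. now rewrite !clamp_id in Hmax.
Qed.

Lemma cont_on_bounded (a b : R) (f : R -> R) :
  a <= b -> cont_on a b f -> exists N, forall x, a <= x <= b -> Rabs (f x) <= N.
Proof.
  intros Hab H.
  destruct (cont_on_attains_min a b f Hab H) as [m [_ Hm]].
  destruct (cont_on_attains_max a b f Hab H) as [M [_ HM]].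
  exists (Rmax (Rabs (f m)) (Rabs (f M))). intros x Hx.
  specialize (Hm x Hx). specialize (HM x Hx).
  unfold Rmax, Rabs; repeat destruct Rle_dec; repeat destruct Rcase_abs; lra.
Qed.

Lemma Rinv_le_swap (x y : R) : 0 < x -> / x <= y -> / y <= x.
Proof.
  intros Hx H. rewrite <- (Rinv_inv x).
  apply Rinv_le_contravar; [apply Rinv_0_lt_compat; exact Hx | exact H].
Qed.

Definition C2_bounded_on (a b M : R) (f : R -> R) : Prop :=
  exists f1 f2, has_deriv_on a b f f1 /\ has_deriv_on a b f1 f2 /\
    forall l, a <= l <= b -> / M <= f l <= M /\ Rabs (f1 l) <= M /\ Rabs (f2 l) <= M.

Lemma C2_bounded_on_le (a b M M' : R) (f : R -> R) :
  0 < M <= M' -> C2_bounded_on a b M f -> C2_bounded_on a b M' f.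
Proof.
  intros HM [f1 [f2 [H1 [H2 Hb]]]]. exists f1, f2. split; [exact H1 | split; [exact H2 |]].
  intros l Hl. assert (/ M' <= / M) by (apply Rinv_le_contravar; lra).
  specialize (Hb l Hl). lra.
Qed.

Lemma C2_on_bounded_on (a b : R) (f : R -> R) :
  a <= b -> C2_on a b f -> (forall l, a <= l <= b -> 0 < f l) ->
  exists M, 0 < M /\ C2_bounded_on a b M f.
Proof.
  intros Hab [f1 [f2 [H1 [H2 H2c]]]] Hpos.
  destruct (cont_on_attains_min a b f Hab (has_deriv_on_cont_on _ _ _ _ H1)) as [m [Hm Hmin]].
  destruct (cont_on_bounded a b f Hab (has_deriv_on_cont_on _ _ _ _ H1)) as [N0 HN0].
  destruct (cont_on_bounded a b f1 Hab (has_deriv_on_cont_on _ _ _ _ H2)) as [N1 HN1].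
  destruct (cont_on_bounded a b f2 Hab H2c) as [N2 HN2].
  set (M := Rmax (Rmax (/ f m) N0) (Rmax N1 N2)).
  assert (Hfm : 0 < f m) by (apply Hpos, Hm).
  assert (HmM : / f m <= M) by (unfold M; eapply Rle_trans; apply Rmax_l).
  assert (HN0M : N0 <= M) by (unfold M; eapply Rle_trans; [apply Rmax_r | apply Rmax_l]).
  assert (HN1M : N1 <= M) by (unfold M; eapply Rle_trans; [apply Rmax_l | apply Rmax_r]).
  assert (HN2M : N2 <= M) by (unfold M; eapply Rle_trans; apply Rmax_r).
  assert (Hinvm : 0 < / f m) by (apply Rinv_0_lt_compat; exact Hfm).
  exists M. split; [lra |]. exists f1, f2. split; [exact H1 | split; [exact H2 |]].
  intros l Hl. specialize (HN0 l Hl). specialize (HN1 l Hl). specialize (HN2 l Hl).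
  assert (/ M <= f m) by (apply Rinv_le_swap; lra).
  specialize (Hmin l Hl). pose proof (Rle_abs (f l)). repeat split; lra.
Qed.

Lemma has_deriv_on_id (a b : R) : has_deriv_on a b (fun x => x) (fun _ => 1).
Proof.
  intros x _ eps Heps. exists 1. split; [lra |]. intros y _ _.
  replace (y - x - 1 * (y - x)) with 0 by ring. rewrite Rabs_R0.
  apply Rmult_le_pos; [lra | apply Rabs_pos].
Qed.

Lemma has_deriv_on_const (a b c : R) : has_deriv_on a b (fun _ => c) (fun _ => 0).
Proof.
  intros x _ eps Heps. exists 1. split; [lra |]. intros y _ _.
  replace (c - c - 0 * (y - x)) with 0 by ring. rewrite Rabs_R0.
  apply Rmult_le_pos; [lra | apply Rabs_pos].
Qed.

Lemma C2_bounded_on_id (a b : R) :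
  0 < a -> C2_bounded_on a b (Rmax (/ a) (Rmax b 1)) (fun x => x).
Proof.
  intros Ha. exists (fun _ => 1), (fun _ => 0).
  split; [apply has_deriv_on_id | split; [apply has_deriv_on_const |]].
  intros l Hl. pose proof (Rmax_l (/ a) (Rmax b 1)). pose proof (Rmax_r (/ a) (Rmax b 1)).
  pose proof (Rmax_l b 1). pose proof (Rmax_r b 1).
  assert (/ Rmax (/ a) (Rmax b 1) <= a) by (apply Rinv_le_swap; lra).
  rewrite Rabs_R1, Rabs_R0. repeat split; lra.
Qed.

Definition log_deriv_bounded (a b B1 B2 : R) (f : R -> R) : Prop :=
  exists d dd, forall l, a <= l <= b ->
    D_in f (fun x => f x * d x) (Icc a b) l /\ D_in d dd (Icc a b) l /\
    Rabs (d l) <= B1 /\ Rabs (dd l) <= B2.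

Lemma log_deriv_bounded_le (a b B1 B2 B1' B2' : R) (f : R -> R) :
  B1 <= B1' -> B2 <= B2' -> log_deriv_bounded a b B1 B2 f -> log_deriv_bounded a b B1' B2' f.
Proof.
  intros H1 H2 [d [dd H]]. exists d, dd. intros l Hl.
  destruct (H l Hl) as [Df [Dd [Bd Bdd]]]. repeat split; auto; lra.
Qed.

Lemma log_deriv_bounded_ext (a b B1 B2 : R) (f g : R -> R) :
  (forall l, a <= l <= b -> f l = g l) ->
  log_deriv_bounded a b B1 B2 f -> log_deriv_bounded a b B1 B2 g.
Proof.
  intros Efg [d [dd H]]. exists d, dd. intros l Hl.
  destruct (H l Hl) as [Df Hrest]. split; [| exact Hrest].
  refine (D_in_eq f g _ _ _ l Efg Hl _ Df). simpl. now rewrite Efg.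
Qed.

Lemma log_deriv_bounded_mul (a b B1 B2 C1 C2 : R) (f g : R -> R) :
  log_deriv_bounded a b B1 B2 f -> log_deriv_bounded a b C1 C2 g ->
  log_deriv_bounded a b (B1 + C1) (B2 + C2) (fun x => f x * g x).
Proof.
  intros [d [dd Hf]] [e [de Hg]].
  exists (fun x => d x + e x), (fun x => dd x + de x). intros l Hl.
  destruct (Hf l Hl) as [Df [Dd [Bd Bdd]]]. destruct (Hg l Hl) as [Dg [De [Be Bde]]].
  split; [| split; [now apply Dadd |]].
  - refine (D_in_ext _ _ _ _ _ _ (Dmult _ _ _ _ _ _ Df Dg)). simpl. ring.
  - split; (eapply Rle_trans; [apply Rabs_triang | lra]).
Qed.

Lemma C2_bounded_on_log_deriv (a b M : R) (f : R -> R) :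
  0 < M -> C2_bounded_on a b M f ->
  log_deriv_bounded a b (M * M) (M * M + (M * M) ^ 2) f.
Proof.
  intros HM [f1 [f2 [H1 [H2 Hb]]]].
  exists (fun x => f1 x / f x), (fun x => f2 x / f x - (f1 x / f x) ^ 2). intros l Hl.
  destruct (Hb l Hl) as [[Hlo Hhi] [Hf1 Hf2]].
  assert (Hpos : 0 < f l) by (pose proof (Rinv_0_lt_compat M HM); lra).
  assert (Hinv : / f l <= M) by (apply Rinv_le_swap; lra).
  assert (Hd : Rabs (f1 l / f l) <= M * M).
  { unfold Rdiv. rewrite Rabs_mult, (Rabs_inv (f l)), (Rabs_right (f l)) by lra.
    apply Rmult_le_compat; [apply Rabs_pos | left; apply Rinv_0_lt_compat | |]; lra. }
  split; [| split; [| split]].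
  - refine (D_in_ext _ _ _ _ _ _ (has_deriv_on_D_in _ _ _ _ H1 l Hl)). simpl. field. lra.
  - refine (D_in_ext _ _ _ _ _ _
      (Dmult _ _ _ _ _ _ (has_deriv_on_D_in _ _ _ _ H2 l Hl)
         (D_in_inv f f1 _ l ltac:(lra) (has_deriv_on_D_in _ _ _ _ H1 l Hl)))).
    simpl. field. lra.
  - exact Hd.
  - eapply Rle_trans; [apply Rabs_triang |]. rewrite Rabs_Ropp, <- RPow_abs.
    apply Rplus_le_compat; [| apply pow_incr; split; [apply Rabs_pos | exact Hd]].
    unfold Rdiv. rewrite Rabs_mult, (Rabs_inv (f l)), (Rabs_right (f l)) by lra.
    apply Rmult_le_compat; [apply Rabs_pos | left; apply Rinv_0_lt_compat | |]; lra.
Qed.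

Lemma log_deriv_bounded_derivs_le (a b B1 B2 q : R) (f f1 f2 : R -> R) :
  a < b -> log_deriv_bounded a b B1 B2 f -> (forall l, a <= l <= b -> Rabs (f l) <= q) ->
  has_deriv_on a b f f1 -> has_deriv_on a b f1 f2 ->
  forall l, a <= l <= b -> Rabs (f1 l) <= q * B1 /\ Rabs (f2 l) <= q * (B1 ^ 2 + B2).
Proof.
  intros Hab [d [dd H]] Hq H1 H2 l Hl.
  assert (E1 : forall y, a <= y <= b -> f1 y = f y * d y).
  { intros y Hy. apply (D_in_Icc_unique a b f f1 (fun x => f x * d x) y Hab Hy);
      [exact (has_deriv_on_D_in _ _ _ _ H1 y Hy) | apply H, Hy]. }
  destruct (H l Hl) as [Df [Dd [Bd Bdd]]].
  assert (E2 : f2 l = f l * d l * d l + f l * dd l).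
  { apply (D_in_Icc_unique a b f1 f2 (fun x => f x * d x * d x + f x * dd x) l Hab Hl);
      [exact (has_deriv_on_D_in _ _ _ _ H2 l Hl) |].
    refine (D_in_eq (fun x => f x * d x) f1 _ _ _ l _ Hl eq_refl (Dmult _ _ _ _ _ _ Df Dd)).
    intros y Hy. symmetry. exact (E1 y Hy). }
  specialize (Hq l Hl). pose proof (Rabs_pos (f l)). pose proof (Rabs_pos (d l)).
  rewrite E1, E2 by exact Hl. split.
  - rewrite Rabs_mult. apply Rmult_le_compat; lra.
  - eapply Rle_trans; [apply Rabs_triang |]. rewrite !Rabs_mult.
    assert (Rabs (f l) * Rabs (d l) * Rabs (d l) <= q * B1 * B1)
      by (repeat apply Rmult_le_compat; auto using Rmult_le_pos).
    assert (Rabs (f l) * Rabs (dd l) <= q * B2) by (apply Rmult_le_compat; auto using Rabs_pos).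
    replace (q * (B1 ^ 2 + B2)) with (q * B1 * B1 + q * B2) by ring. lra.
Qed.

Lemma finite_uniform_bound (P : nat -> R -> Prop) (k : nat) :
  (forall i M M', 0 < M <= M' -> P i M -> P i M') ->
  (forall i, (i < k)%nat -> exists M, 0 < M /\ P i M) ->
  exists M, 0 < M /\ forall i, (i < k)%nat -> P i M.
Proof.
  intros Hmono. induction k as [| k IH]; intros Hex.
  - exists 1. split; [lra | intros i Hi; lia].
  - destruct IH as [M [HM HP]]; [intros i Hi; apply Hex; lia |].
    destruct (Hex k ltac:(lia)) as [Mk [HMk HPk]].
    exists (Rmax M Mk). pose proof (Rmax_l M Mk). pose proof (Rmax_r M Mk).
    split; [lra |]. intros i Hi. destruct (Nat.eq_dec i k) as [-> | Hne].
    + apply (Hmono k Mk); [lra | exact HPk].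
    + apply (Hmono i M); [lra | apply HP; lia].
Qed.

Lemma C2_bounded_on_common (a b : R) (k : nat) (Rs : nat -> R -> R) (Q0 : R -> R) :
  0 < a -> a <= b ->
  (forall i, (i < k)%nat -> C2_on a b (Rs i)) ->
  (forall i, (i < k)%nat -> forall l, a <= l <= b -> 0 < Rs i l) ->
  C2_on a b Q0 -> (forall l, a <= l <= b -> 0 < Q0 l) ->
  exists M, 0 < M /\ C2_bounded_on a b M (fun x => x) /\ C2_bounded_on a b M Q0 /\
    forall i, (i < k)%nat -> C2_bounded_on a b M (Rs i).
Proof.
  intros Ha Hab HRs HRs_pos HQ0 HQ0_pos.
  destruct (finite_uniform_bound (fun i M => C2_bounded_on a b M (Rs i)) k) as [MR [HMR HR]].
  { intros i M M'. apply C2_bounded_on_le. }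
  { intros i Hi. apply C2_on_bounded_on; auto. }
  destruct (C2_on_bounded_on a b Q0 Hab HQ0 HQ0_pos) as [MQ [HMQ HQ]].
  pose proof (C2_bounded_on_id a b Ha) as Hid.
  pose proof (Rmax_l (/ a) (Rmax b 1)). pose proof (Rinv_0_lt_compat a Ha).
  set (Mid := Rmax (/ a) (Rmax b 1)) in *.
  pose proof (Rmax_l (Rmax MR MQ) Mid). pose proof (Rmax_r (Rmax MR MQ) Mid).
  pose proof (Rmax_l MR MQ). pose proof (Rmax_r MR MQ).
  set (M := Rmax (Rmax MR MQ) Mid) in *.
  exists M. split; [| split; [| split]].
  - lra.
  - apply (C2_bounded_on_le a b Mid); [lra | exact Hid].
  - apply (C2_bounded_on_le a b MQ); [lra | exact HQ].
  - intros i Hi. apply (C2_bounded_on_le a b MR); [lra | apply HR, Hi].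
Qed.

Lemma C2_bounded_on_range (a b M : R) (f : R -> R) :
  C2_bounded_on a b M f -> forall l, a <= l <= b -> / M <= f l <= M.
Proof. intros [f1 [f2 [_ [_ H]]]] l Hl. apply H, Hl. Qed.

Definition recursion_map (be ga x : R) : R := (1 + ga * x) / (be + x).

(* x phi'(x) / phi(x) for phi = recursion_map be ga: the logarithmic derivative
   of phi o X is this factor times that of X. *)
Definition elasticity (be ga x : R) : R :=
  - (1 - be * ga) * x / ((1 + ga * x) * (be + x)).

Definition elasticity_deriv (be ga x : R) : R :=
  - (1 - be * ga) * (be - ga * x ^ 2) / ((1 + ga * x) * (be + x)) ^ 2.

Definition elasticity_bound (be ga xlo xhi : R) : R :=
  1 - (be + ga * xlo ^ 2) / ((1 + ga * xhi) * (be + xhi)).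

Definition elasticity_deriv_bound (be ga xlo xhi : R) : R :=
  (be + ga * xhi ^ 2) / xlo ^ 2.

Section Elasticity.

Variables be ga : R.
Hypotheses (Hbe : 0 <= be) (Hga : 0 <= ga).

Lemma recursion_map_eq (x : R) :
  be + x <> 0 -> recursion_map be ga x = ga + (1 - be * ga) / (be + x).
Proof. intros. unfold recursion_map. field. exact H. Qed.

Lemma recursion_map_gt (x : R) : be * ga < 1 -> 0 < be + x -> ga < recursion_map be ga x.
Proof.
  intros Hbega Hx. rewrite recursion_map_eq by lra.
  assert (0 < (1 - be * ga) / (be + x)) by (apply Rdiv_lt_0_compat; lra). lra.
Qed.

Lemma recursion_map_antitone (x y : R) :
  be * ga < 1 -> 0 < be + x -> x <= y -> recursion_map be ga y <= recursion_map be ga x.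
Proof.
  intros Hbega Hx Hxy. rewrite !recursion_map_eq by lra.
  apply Rplus_le_compat_l, Rmult_le_compat_l; [lra |].
  apply Rinv_le_contravar; lra.
Qed.

Lemma recursion_map_derivable (x : R) :
  0 < x -> derivable_pt_lim (recursion_map be ga) x
             (recursion_map be ga x * elasticity be ga x / x).
Proof.
  intros Hx. assert (0 < 1 + ga * x) by nra.
  apply is_derive_Reals. unfold recursion_map, elasticity.
  auto_derive; [lra | field; repeat split; lra].
Qed.

Lemma elasticity_derivable (x : R) :
  0 < x -> derivable_pt_lim (elasticity be ga) x (elasticity_deriv be ga x).
Proof.
  intros Hx. assert (0 < 1 + ga * x) by nra.
  apply is_derive_Reals. unfold elasticity, elasticity_deriv.
  auto_derive; [apply Rmult_integral_contrapositive; split; lra | field; split; lra].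
Qed.

(* |elasticity x| = 1 - (be + 2 be ga x + ga x^2) / ((1 + ga x)(be + x)), and the
   subtracted fraction is at least (be + ga xlo^2) / ((1 + ga xhi)(be + xhi)). *)
Lemma Rabs_elasticity_le (xlo xhi x : R) :
  be * ga < 1 -> 0 < xlo -> xlo <= x <= xhi ->
  Rabs (elasticity be ga x) <= elasticity_bound be ga xlo xhi.
Proof.
  intros Hbega Hxlo Hx. unfold elasticity, elasticity_bound.
  assert (Hgx : 0 < 1 + ga * x) by nra.
  assert (HP : 0 < (1 + ga * x) * (be + x)) by (apply Rmult_lt_0_compat; lra).
  assert (HPhi : (1 + ga * x) * (be + x) <= (1 + ga * xhi) * (be + xhi)).
  { apply Rmult_le_compat; nra. }
  assert (E : - (1 - be * ga) * x / ((1 + ga * x) * (be + x)) =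
              - (1 - (be + 2 * be * ga * x + ga * x ^ 2) / ((1 + ga * x) * (be + x)))).
  { field. split; lra. }
  assert (Hbgx : 0 <= be * ga * x) by (apply Rmult_le_pos; nra).
  assert (Hle1 : (be + 2 * be * ga * x + ga * x ^ 2) / ((1 + ga * x) * (be + x)) <= 1).
  { apply Rle_div_l; [exact HP | nra]. }
  assert ((be + ga * xlo ^ 2) / ((1 + ga * xhi) * (be + xhi)) <=
          (be + 2 * be * ga * x + ga * x ^ 2) / ((1 + ga * x) * (be + x))).
  { unfold Rdiv. apply Rle_trans with ((be + ga * xlo ^ 2) * / ((1 + ga * x) * (be + x))).
    - apply Rmult_le_compat_l; [nra | apply Rinv_le_contravar; lra].
    - apply Rmult_le_compat_r; [left; apply Rinv_0_lt_compat; exact HP |].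
      assert (ga * xlo ^ 2 <= ga * x ^ 2) by (apply Rmult_le_compat_l; nra). lra. }
  rewrite E, Rabs_Ropp, Rabs_right by lra. lra.
Qed.

Lemma elasticity_bound_lt_1 (xlo xhi : R) :
  0 < be \/ 0 < ga -> 0 < xlo <= xhi -> elasticity_bound be ga xlo xhi < 1.
Proof.
  intros Hnz Hx. unfold elasticity_bound.
  assert (0 < (be + ga * xlo ^ 2) / ((1 + ga * xhi) * (be + xhi))); [| lra].
  assert (0 < xlo ^ 2) by (apply pow_lt; lra).
  apply Rdiv_lt_0_compat; [destruct Hnz; nra | apply Rmult_lt_0_compat; nra].
Qed.

Lemma Rabs_elasticity_deriv_le (xlo xhi x : R) :
  be * ga < 1 -> 0 < xlo -> xlo <= x <= xhi ->
  Rabs (elasticity_deriv be ga x) <= elasticity_deriv_bound be ga xlo xhi.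
Proof.
  intros Hbega Hxlo Hx. unfold elasticity_deriv, elasticity_deriv_bound.
  assert (0 <= ga * x) by (apply Rmult_le_pos; lra).
  assert (0 <= ga * x * x) by (apply Rmult_le_pos; lra).
  assert (0 <= ga * x * be) by (apply Rmult_le_pos; lra).
  assert (HP : x <= (1 + ga * x) * (be + x)) by nra.
  unfold Rdiv. rewrite Rabs_mult, Rabs_inv, (Rabs_right (((1 + ga * x) * (be + x)) ^ 2))
    by (apply Rle_ge, pow2_ge_0).
  apply Rmult_le_compat; [apply Rabs_pos | left; apply Rinv_0_lt_compat, pow_lt; nra | |].
  - rewrite Rabs_mult, Rabs_Ropp, (Rabs_right (1 - be * ga)) by lra.
    assert (Rabs (be - ga * x ^ 2) <= be + ga * xhi ^ 2).
    { apply Rabs_le.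
      assert (0 <= ga * x ^ 2) by (apply Rmult_le_pos; [lra | apply pow2_ge_0]).
      assert (ga * x ^ 2 <= ga * xhi ^ 2) by (apply Rmult_le_compat_l; [lra | apply pow_incr; lra]).
      lra. }
    pose proof (Rabs_pos (be - ga * x ^ 2)). nra.
  - apply Rinv_le_contravar; [apply pow_lt; lra | apply pow_incr; lra].
Qed.

End Elasticity.

Lemma log_deriv_bounded_recursion_map (be ga a b xlo xhi E1 E2 : R) (X : R -> R) :
  0 <= be -> 0 <= ga -> be * ga < 1 -> 0 < xlo ->
  (forall l, a <= l <= b -> xlo <= X l <= xhi) ->
  log_deriv_bounded a b E1 E2 X ->
  log_deriv_bounded a b (elasticity_bound be ga xlo xhi * E1)
    (xhi * elasticity_deriv_bound be ga xlo xhi * E1 ^ 2 + elasticity_bound be ga xlo xhi * E2)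
    (fun l => recursion_map be ga (X l)).
Proof.
  intros Hbe Hga Hbega Hxlo HX [e [de H]].
  exists (fun l => elasticity be ga (X l) * e l).
  exists (fun l => X l * e l * elasticity_deriv be ga (X l) * e l + elasticity be ga (X l) * de l).
  intros l Hl. destruct (H l Hl) as [DX [De [Be Bde]]].
  assert (HXl := HX l Hl).
  assert (Hh := Rabs_elasticity_le be ga Hbe Hga xlo xhi (X l) Hbega Hxlo HXl).
  assert (Hh' := Rabs_elasticity_deriv_le be ga Hbe Hga xlo xhi (X l) Hbega Hxlo HXl).
  split; [| split; [| split]].
  - refine (D_in_ext _ _ _ _ _ _ (D_in_comp _ (fun x => recursion_map be ga x * elasticity be ga x / x)
               _ _ _ _ (recursion_map_derivable be ga Hbe Hga (X l) ltac:(lra)) DX)).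
    simpl. field. lra.
  - exact (Dmult _ _ _ _ _ _ (D_in_comp _ _ _ _ _ _ (elasticity_derivable be ga Hbe Hga (X l) ltac:(lra)) DX) De).
  - rewrite Rabs_mult. apply Rmult_le_compat; auto using Rabs_pos.
  - eapply Rle_trans; [apply Rabs_triang |]. rewrite !Rabs_mult, (Rabs_right (X l)) by lra.
    apply Rplus_le_compat; [| apply Rmult_le_compat; auto using Rabs_pos].
    pose proof (Rabs_pos (e l)). pose proof (Rabs_pos (elasticity_deriv be ga (X l))).
    replace (X l * Rabs (e l) * Rabs (elasticity_deriv be ga (X l)) * Rabs (e l))
      with ((X l * Rabs (elasticity_deriv be ga (X l))) * (Rabs (e l) * Rabs (e l))) by ring.
    replace (xhi * elasticity_deriv_bound be ga xlo xhi * E1 ^ 2)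
      with ((xhi * elasticity_deriv_bound be ga xlo xhi) * (E1 * E1)) by ring.
    apply Rmult_le_compat; try apply Rmult_le_pos; try apply Rmult_le_compat; lra.
Qed.

Lemma affine_contraction_invariant (c u v n : R) :
  c < 1 -> 0 <= u -> 0 <= v -> 0 <= n -> exists B, n <= B /\ u + c * (v + B) <= B.
Proof.
  intros Hc Hu Hv Hn. exists (n + (u + v) / (1 - c)).
  assert (E : (u + v) / (1 - c) * (1 - c) = u + v) by (field; lra).
  assert (0 <= (u + v) / (1 - c)) by (apply Rdiv_le_0_compat; lra).
  split; nra.
Qed.

Lemma family_step_eq (be ga l r q : R) :
  (1 + ga * l * r * q) / (be + l * r * q) = recursion_map be ga (l * r * q).
Proof. unfold recursion_map. now rewrite !Rmult_assoc. Qed.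

Section Family.

Variables (be ga a b : R) (k : nat) (Rs : nat -> R -> R) (Q0 : R -> R).
Hypotheses (Hbe : 0 <= be) (Hga : 0 <= ga) (Hbega : be * ga < 1).

Local Notation family := (inFamily be ga k Rs Q0).

Lemma family_range (rlo rhi qlo qhi : R) :
  0 < rlo -> 0 < be + rlo * ga ->
  (forall i, (i < k)%nat -> forall l, a <= l <= b -> rlo <= l * Rs i l <= rhi) ->
  recursion_map be ga (rlo * ga) <= qhi -> qlo <= recursion_map be ga (rhi * qhi) ->
  (forall l, a <= l <= b -> qlo <= Q0 l <= qhi /\ ga < Q0 l) ->
  forall Q, family Q -> forall l, a <= l <= b -> qlo <= Q l <= qhi /\ ga < Q l.
Proof.
  intros Hrlo Hden HR Hqhi Hqlo HQ0 Q HQ. induction HQ as [| Q i Hi HQ IH]; [exact HQ0 |].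
  intros l Hl. rewrite family_step_eq.
  destruct (HR i Hi l Hl) as [HRlo HRhi]. destruct (IH l Hl) as [[HQlo HQhi] HQga].
  assert (HXlo : rlo * ga <= l * Rs i l * Q l) by nra.
  assert (HXhi : l * Rs i l * Q l <= rhi * qhi) by nra.
  split; [split |].
  - eapply Rle_trans; [exact Hqlo |]. apply recursion_map_antitone; auto; lra.
  - eapply Rle_trans; [| exact Hqhi]. apply recursion_map_antitone; auto.
  - apply recursion_map_gt; auto; lra.
Qed.

Lemma family_log_deriv_bounded (xlo xhi L1 L2 B1 B2 : R) :
  0 < xlo ->
  (forall i, (i < k)%nat -> forall Q, family Q ->
     forall l, a <= l <= b -> xlo <= l * Rs i l * Q l <= xhi) ->
  (forall i, (i < k)%nat -> log_deriv_bounded a b L1 L2 (fun l => l * Rs i l)) ->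
  log_deriv_bounded a b B1 B2 Q0 ->
  elasticity_bound be ga xlo xhi * (L1 + B1) <= B1 ->
  xhi * elasticity_deriv_bound be ga xlo xhi * (L1 + B1) ^ 2
    + elasticity_bound be ga xlo xhi * (L2 + B2) <= B2 ->
  forall Q, family Q -> log_deriv_bounded a b B1 B2 Q.
Proof.
  intros Hxlo HX HR HQ0 HB1 HB2 Q HQ. induction HQ as [| Q i Hi HQ IH]; [exact HQ0 |].
  apply (log_deriv_bounded_ext a b B1 B2 (fun l => recursion_map be ga (l * Rs i l * Q l)));
    [intros l _; symmetry; apply family_step_eq |].
  apply (log_deriv_bounded_le _ _ _ _ _ _ _ HB1 HB2).
  apply log_deriv_bounded_recursion_map; auto.
  exact (log_deriv_bounded_mul _ _ _ _ _ _ _ _ (HR i Hi) IH).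
Qed.

Lemma family_compact_range (M : R) :
  0 < be \/ 0 < ga -> a <= b -> 0 < M ->
  C2_bounded_on a b M (fun x => x) -> C2_bounded_on a b M Q0 ->
  (forall i, (i < k)%nat -> C2_bounded_on a b M (Rs i)) ->
  (forall l, a <= l <= b -> ga < Q0 l) ->
  exists q xlo xhi, 0 < xlo <= xhi /\
    (forall Q, family Q -> forall l, a <= l <= b -> Rabs (Q l) <= q) /\
    (forall i, (i < k)%nat -> forall Q, family Q ->
       forall l, a <= l <= b -> xlo <= l * Rs i l * Q l <= xhi).
Proof.
  intros Hnz Hab HM Hid HQ0 HRs HQ0ga.
  pose proof (Rinv_0_lt_compat M HM).
  assert (HMinv : / M <= M) by (destruct (C2_bounded_on_range _ _ _ _ Hid a (conj (Rle_refl a) Hab)); lra).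
  set (rlo := / M * / M). set (rhi := M * M).
  assert (Hr : forall i, (i < k)%nat -> forall l, a <= l <= b -> rlo <= l * Rs i l <= rhi).
  { intros i Hi l Hl.
    destruct (C2_bounded_on_range _ _ _ _ Hid l Hl).
    destruct (C2_bounded_on_range _ _ _ _ (HRs i Hi) l Hl).
    split; apply Rmult_le_compat; lra. }
  assert (Hrlo : 0 < rlo) by (apply Rmult_lt_0_compat; lra).
  assert (Hrhi : 0 < rhi) by (apply Rmult_lt_0_compat; lra).
  assert (Hden : 0 < be + rlo * ga) by (destruct Hnz; nra).
  pose proof (Rmax_l M (recursion_map be ga (rlo * ga))) as HMqhi.
  set (qhi := Rmax M (recursion_map be ga (rlo * ga))) in *.
  assert (Hqhi : 0 < rhi * qhi) by (apply Rmult_lt_0_compat; lra).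
  pose proof (Rmin_l (/ M) (recursion_map be ga (rhi * qhi))) as HqloM.
  set (qlo := Rmin (/ M) (recursion_map be ga (rhi * qhi))) in *.
  assert (Hqlo : 0 < qlo).
  { apply Rmin_pos; [lra |]. pose proof (recursion_map_gt be ga (rhi * qhi) Hbega ltac:(lra)). lra. }
  assert (Hrange := family_range rlo rhi qlo qhi Hrlo Hden Hr
                      (Rmax_r _ _) (Rmin_r _ _)).
  specialize (Hrange ltac:(intros l Hl; destruct (C2_bounded_on_range _ _ _ _ HQ0 l Hl);
                           specialize (HQ0ga l Hl); repeat split; lra)).
  exists qhi, (rlo * qlo), (rhi * qhi). split; [split | split].
  - apply Rmult_lt_0_compat; lra.
  - apply Rmult_le_compat; try lra. apply Rmult_le_compat; lra.
  - intros Q HQ l Hl. destruct (Hrange Q HQ l Hl). rewrite Rabs_right; lra.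
  - intros i Hi Q HQ l Hl. destruct (Hr i Hi l Hl). destruct (Hrange Q HQ l Hl).
    split; apply Rmult_le_compat; lra.
Qed.
Lemma family_log_deriv_uniform (M xlo xhi : R) :
  0 < be \/ 0 < ga -> 0 < M -> 0 < xlo <= xhi ->
  (forall i, (i < k)%nat -> forall Q, family Q ->
     forall l, a <= l <= b -> xlo <= l * Rs i l * Q l <= xhi) ->
  C2_bounded_on a b M (fun x => x) -> C2_bounded_on a b M Q0 ->
  (forall i, (i < k)%nat -> C2_bounded_on a b M (Rs i)) ->
  exists B1 B2, forall Q, family Q -> log_deriv_bounded a b B1 B2 Q.
Proof.
  intros Hnz HM Hx HX Hid HQ0 HRs.
  set (c := elasticity_bound be ga xlo xhi).
  assert (Hc : c < 1) by (apply elasticity_bound_lt_1; auto).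
  set (n1 := M * M). set (n2 := M * M + (M * M) ^ 2).
  assert (Hn : 0 <= n1 <= n2) by (pose proof (pow2_ge_0 (M * M)); unfold n1, n2; nra).
  destruct (affine_contraction_invariant c 0 (n1 + n1) n1) as [B1 [HB1n HB1]]; try lra.
  set (A := xhi * elasticity_deriv_bound be ga xlo xhi * (n1 + n1 + B1) ^ 2).
  assert (HA : 0 <= A).
  { apply Rmult_le_pos; [apply Rmult_le_pos; [lra |] | apply pow2_ge_0].
    apply Rdiv_le_0_compat; [nra | apply pow_lt; lra]. }
  destruct (affine_contraction_invariant c A (n2 + n2) n2) as [B2 [HB2n HB2]]; try lra.
  exists B1, B2.
  apply (family_log_deriv_bounded xlo xhi (n1 + n1) (n2 + n2)); [lra | exact HX | | | now rewrite Rplus_0_l in HB1 | exact HB2].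
  - intros i Hi. apply log_deriv_bounded_mul; apply C2_bounded_on_log_deriv; auto.
  - apply (log_deriv_bounded_le a b n1 n2); [exact HB1n | exact HB2n |].
    apply C2_bounded_on_log_deriv; auto.
Qed.

End Family.


Theorem lemma3p13 (beta gamma a b : R) (k : nat) (Rs : nat -> R -> R) (Q0 : R -> R) :
  antiferro beta gamma ->
  0 < a -> a < b ->
  (1 <= k)%nat ->
  (forall i, (i < k)%nat -> C2_on a b (Rs i)) ->
  (forall i, (i < k)%nat -> forall l, a <= l <= b -> in_range beta gamma (Rs i l)) ->
  C2_on a b Q0 ->
  (forall l, a <= l <= b -> in_range beta gamma (Q0 l)) ->
  exists lo1 hi1 lo2 hi2 : R,
    forall Q : R -> R, inFamily beta gamma k Rs Q0 Q ->
    forall Q1 Q2 : R -> R, has_deriv_on a b Q Q1 -> has_deriv_on a b Q1 Q2 ->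
    forall l, a <= l <= b ->
      lo1 <= Q1 l <= hi1 /\ lo2 <= Q2 l <= hi2.
Proof.
  intros [Hbe [Hga [Hbega Hnz]]] Ha Hab _ HRs HRs_range HQ0 HQ0_range.
  assert (Hnz' : 0 < beta \/ 0 < gamma) by (destruct Hnz; [left | right]; lra).
  destruct (C2_bounded_on_common a b k Rs Q0 Ha ltac:(lra) HRs) as [M [HM [Hid [HQM HRM]]]];
    [intros i Hi l Hl; destruct (HRs_range i Hi l Hl); lra | exact HQ0 |
     intros l Hl; destruct (HQ0_range l Hl); lra |].
  destruct (family_compact_range beta gamma a b k Rs Q0 Hbe Hga Hbega M) as [q [xlo [xhi [Hx [Hq HX]]]]];
    auto; [lra | intros l Hl; apply HQ0_range, Hl |].
  destruct (family_log_deriv_uniform beta gamma a b k Rs Q0 Hbe Hga Hbega M xlo xhi)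
    as [B1 [B2 HB]]; auto.
  exists (- (q * B1)), (q * B1), (- (q * (B1 ^ 2 + B2))), (q * (B1 ^ 2 + B2)).
  intros Q HQ Q1 Q2 H1 H2 l Hl.
  destruct (log_deriv_bounded_derivs_le a b B1 B2 q Q Q1 Q2 Hab (HB Q HQ) (Hq Q HQ) H1 H2 l Hl).
  split; apply Rabs_le_between; assumption.
Qed.
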